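(* Let $m\ge 1$ and let $A$ be a $2m\times 2$ binary-block matrix. Then $$\operatorname{M}(AD_m(\operatorname{wt}_A)) = 2^{t}\,\operatorname{M}(AD_{m-1}(\operatorname{wt}_{\operatorname{sh}(A)})),$$ where $t$ is the number of blocks of $A$ equal to $\begin{bmatrix}1&1\\1&1\end{bmatrix}$ (i.e. the number of $0$ terms in $\operatorname{code}(A)$).
   Context: The Aztec diamond graph $AD_n$ is the planar dual graph of the Aztec diamond region of order $n$ (the union of unit squares inside $|x|+|y|=n+1$), rotated by $45^\circ$; it consists of $n$ rows and $n$ columns of 4-cycles called d-cells. The centers of the edges of $AD_n$ form a $2n\times 2n$ array, where the four edges of the d-cell in row $i$, column $j$ occupy rows $2i-1,2i$ and columns $2j-1,2j$ of the array (placed according to their position around the d-cell). A weighted $AD_n$ is given by a $2n\times 2n$ weight matrix whose entries are the edge weights. $\operatorname{M}(G)$ for a weighted graph is the sum over perfect matchings of the product of the weights of their edges; $\operatorname{M}(AD_0)=1$. For a $k\times l$ matrix $A$ with $k,l$ even, $AD_n(\operatorname{wt}_A)$ denotes $AD_n$ whose weight matrix is obtained by placing $A$ in the upper-left corner of the $2n\times 2n$ array and filling the rest periodically (translating $A$ by $l$ columns to the right and $k$ rows down; partial copies allowed at the edges). A $2m\times 2$ matrix $M$ with $2\times 2$ blocks $M_1,\dots,M_m$ (stacked vertically) is a binary-block matrix if each $M_i$ is one of $\begin{bmatrix}1&1\\1&1\end{bmatrix}$, $\begin{bmatrix}1&1\\1&0\end{bmatrix}$, $\begin{bmatrix}0&1\\1&1\end{bmatrix}$,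 $\begin{bmatrix}0&1\\1&0\end{bmatrix}$; its encoded sequence $\operatorname{code}(M)=(s_1,\dots,s_m)$ has $s_i=0,+,-,\pm$ respectively. The operator $\operatorname{sh}$: $\operatorname{sh}(M)$ is the binary-block matrix whose encoded sequence is obtained from $\operatorname{code}(M)$ as follows (a $\pm$ is regarded as a $+$ and a $-$ at the same position): delete all $0$ terms, leaving those positions empty; simultaneously move every $+$ one position to the left cyclically (a $+$ at position $1$ goes to position $m$), leaving its old position empty if nothing else is there; positions $-$ stay fixed; a position holding both a $+$ and a $-$ becomes $\pm$; finally fill all empty positions with $0$. *)

From HB Require Import structures.
From mathcomp Require Import all_boot all_order all_algebra.
Set Implicit Arguments. Unset Strict Implicit. Unset Printing Implicit Defensive.

(* ---------- The Aztec diamond graph AD_n ----------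
   d-cell (i,j), 0 <= i,j < n (row i, column j).  After the 45 degree rotation
   the d-cell is a 4-cycle with vertices N, E, S, W.  Adjacent d-cells share
   vertices: E of (i,j) = W of (i,j+1), S of (i,j) = N of (i+1,j).
   Vertices:
     "vertical" vertices  (true,  k, c) with k : 'I_(n+1), c : 'I_n :
          the N vertex of cell (k,c) / S vertex of cell (k-1,c);
     "horizontal" vertices (false, k, r) with k : 'I_(n+1), r : 'I_n :
          the W vertex of cell (r,k) / E vertex of cell (r,k-1).
   Edges: (i, j, a, b) = edge of d-cell (i,j) joining the N (a=false) or
   S (a=true) vertex with the W (b=false) or E (b=true) vertex; it sits in
   row 2i+a, column 2j+b (0-indexed) of the 2n x 2n edge array, i.e.
   NW edge top-left, NE top-right, SW bottom-left, SE bottom-right. *)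

Definition ad_edge (n : nat) := ('I_n * 'I_n * bool * bool)%type.
Definition ad_vertex (n : nat) := (bool * 'I_n.+1 * 'I_n)%type.

Definition e_row n (e : ad_edge n) : nat := let: (i, j, a, b) := e in (i.*2 + a)%N.
Definition e_col n (e : ad_edge n) : nat := let: (i, j, a, b) := e in (j.*2 + b)%N.

Definition e_vert n (e : ad_edge n) : ad_vertex n :=
  let: (i, j, a, b) := e in (true, inord (i + a), j).
Definition e_horz n (e : ad_edge n) : ad_vertex n :=
  let: (i, j, a, b) := e in (false, inord (j + b), i).

Definition incident n (e : ad_edge n) (v : ad_vertex n) : bool :=
  (v == e_vert e) || (v == e_horz e).

Definition perfect_matching n (S : {set ad_edge n}) : bool :=
  [forall v : ad_vertex n, #|[set e in S | incident e v]| == 1].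

Definition Mw (n : nat) (W : nat -> nat -> nat) : nat :=
  \sum_(S : {set ad_edge n} | perfect_matching S) \prod_(e in S) W (e_row e) (e_col e).

Definition wt k l (A : 'M[nat]_(k, l)) (r c : nat) : nat :=
  match (insub (r %% k) : option 'I_k), (insub (c %% l) : option 'I_l) with
  | Some i, Some j => A i j
  | _, _ => 0%N
  end.

Inductive bsign := sZero | sPlus | sMinus | sPM.

Definition sign_entry (s : bsign) (a b : nat) : nat :=
  match s, a, b with
  | sZero, _, _ => 1
  | sPlus, 1, 1 => 0
  | sPlus, _, _ => 1
  | sMinus, 0, 0 => 0
  | sMinus, _, _ => 1
  | sPM, 0, 0 => 0
  | sPM, 1, 1 => 0
  | sPM, _, _ => 1
  end.

Definition bbmat (m : nat) (s : seq bsign) : 'M[nat]_(m.*2, 2) :=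
  \matrix_(r < m.*2, c < 2) sign_entry (nth sZero s r./2) (odd r) c.

Definition is_binary_block (m : nat) (A : 'M[nat]_(m.*2, 2)) : Prop :=
  exists s : seq bsign, size s = m /\ A = bbmat m s.

Definition decode_block (a00 a01 a10 a11 : nat) : bsign :=
  match a00, a01, a10, a11 with
  | 1, 1, 1, 1 => sZero
  | 1, 1, 1, 0 => sPlus
  | 0, 1, 1, 1 => sMinus
  | _, _, _, _ => sPM
  end.

Definition code (m : nat) (A : 'M[nat]_(m.*2, 2)) : seq bsign :=
  [seq decode_block (wt A i.*2 0) (wt A i.*2 1) (wt A i.*2.+1 0) (wt A i.*2.+1 1)
  | i <- iota 0 m].

Definition has_plus (s : bsign) : bool :=
  match s with sPlus | sPM => true | _ => false end.
Definition has_minus (s : bsign) : bool :=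
  match s with sMinus | sPM => true | _ => false end.
Definition is_zero (s : bsign) : bool :=
  match s with sZero => true | _ => false end.

Definition mk_sign (p q : bool) : bsign :=
  match p, q with
  | true, true => sPM | true, false => sPlus
  | false, true => sMinus | false, false => sZero
  end.

(* the shift on encoded sequences: 0's deleted, every + moves one position
   to the left cyclically (position 1 -> position m), - stays fixed.
   0-indexed: new position p gets a + iff old position (p+1) mod m had one. *)
Definition shift_code (s : seq bsign) : seq bsign :=
  let m := size s in
  [seq mk_sign (has_plus (nth sZero s (p.+1 %% m))) (has_minus (nth sZero s p))
  | p <- iota 0 m].

Definition sh (m : nat) (A : 'M[nat]_(m.*2, 2)) : 'M[nat]_(m.*2, 2) :=
  bbmat m (shift_code (code A)).

From HB Require Import structures.
From mathcomp Require Import all_boot all_order all_algebra.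
From mathcomp Require Import ring zify.
Set Implicit Arguments. Unset Strict Implicit. Unset Printing Implicit Defensive.

(* Lemma 3.3 is proved by a transfer-matrix form of urban renewal.

   Encode a perfect matching of AD_n row by row: between two consecutive
   rows of d-cells a binary word of length n records which shared vertices
   are covered from above, and inside a row a word of length n+1 records, for
   every horizontal vertex, whether it is covered by the d-cell to its right.
   When the weights of row i are 1 except alpha_i at the NW and beta_i at the
   SE edges, M(AD_n) becomes a product of row transfer matrices
   [transT alpha_i beta_i] taken from the all-false word to the all-true word
   ([Mw_chain]).  Each row transfer matrix factors through two simpler
   gadgets in two ways, [transT a b = transG a * transS b] and
   [transT a b = (ab+1) transS b * transG a].  Rewriting every factor by the
   second identity and regrouping the gadgets with the first one turns the
   chain of n rows into (prod_i (alpha_i beta_i + 1)) times the chain of the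
   n-1 rows with weights (alpha_i, beta_(i+1)) ([chain_renewal]).  For a
   binary-block matrix, alpha_i beta_i + 1 is 2 exactly on the blocks coded 0
   and the rows (alpha_i, beta_(i+1)) are those of sh(A), which gives the
   lemma. *)

Fixpoint wsum (n : nat) (F : seq bool -> nat) : nat :=
  if n is n'.+1 then wsum n' (fun Z => F (false :: Z)) + wsum n' (fun Z => F (true :: Z))
  else F [::].

Lemma wsumS n F :
  wsum n.+1 F = wsum n (fun Z => F (false :: Z)) + wsum n (fun Z => F (true :: Z)).
Proof. by []. Qed.

Lemma wsum0 F : wsum 0 F = F [::].
Proof. by []. Qed.

Arguments wsum : simpl never.

Lemma eq_wsum n F G : (forall Z, size Z = n -> F Z = G Z) -> wsum n F = wsum n G.
Proof.
elim: n F G => [|n IH] F G H; first by rewrite !wsum0 H.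
by rewrite !wsumS; congr (_ + _); apply: IH => Z hZ; apply: H; rewrite /= hZ.
Qed.

Lemma wsumD n F G : wsum n (fun Z => F Z + G Z) = wsum n F + wsum n G.
Proof.
elim: n F G => [|n IH] F G //; rewrite !wsumS.
rewrite (IH (fun Z => F (false :: Z))) (IH (fun Z => F (true :: Z))). lia.
Qed.

Lemma wsumM n c F : wsum n (fun Z => c * F Z) = c * wsum n F.
Proof.
elim: n F => [|n IH] F //; rewrite !wsumS.
by rewrite (IH (fun Z => F (false :: Z))) (IH (fun Z => F (true :: Z))) mulnDr.
Qed.

Lemma wsumMr n c F : wsum n (fun Z => F Z * c) = wsum n F * c.
Proof. by rewrite mulnC -wsumM; apply: eq_wsum => Z _; rewrite mulnC. Qed.

Lemma wsum_swap n m F :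
  wsum n (fun X => wsum m (fun Y => F X Y)) = wsum m (fun Y => wsum n (fun X => F X Y)).
Proof.
elim: n F => [|n IH] F //; rewrite wsumS.
rewrite (IH (fun X Y => F (false :: X) Y)) (IH (fun X Y => F (true :: X) Y)).
by rewrite -wsumD.
Qed.

Lemma wsum_delta n w F : size w = n -> wsum n (fun Z => (Z == w) * F Z) = F w.
Proof.
elim: n w F => [|n IH] [|b w] F //; first by rewrite wsum0 eqxx mul1n.
move=> [hw]; rewrite wsumS.
have sum_head c : wsum n (fun Z => (c :: Z == b :: w) * F (c :: Z)) = (c == b) * F (b :: w).
  case: (eqVneq c b) => [->|neq].
  - rewrite (eq_wsum (G := fun Z => (Z == w) * F (b :: Z))); last first.
      by move=> Z _; rewrite eqseq_cons eqxx.
    by rewrite (IH w (fun Z => F (b :: Z))) // mul1n.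
  - rewrite (eq_wsum (G := fun _ => 0 * 0)); last first.
      by move=> Z _; rewrite eqseq_cons (negPf neq).
    by rewrite wsumM !mul0n.
by rewrite !sum_head; case: b {sum_head}; rewrite /= ?mul0n ?mul1n ?addn0.
Qed.

Lemma wsum_prod2 n c1 c2 d1 d2 A1 A2 B1 B2 :
  wsum n (fun Z => (c1 * A1 Z + c2 * A2 Z) * (d1 * B1 Z + d2 * B2 Z)) =
  c1 * d1 * wsum n (fun Z => A1 Z * B1 Z) + c1 * d2 * wsum n (fun Z => A1 Z * B2 Z) +
  c2 * d1 * wsum n (fun Z => A2 Z * B1 Z) + c2 * d2 * wsum n (fun Z => A2 Z * B2 Z).
Proof. by rewrite -!wsumM -!wsumD; apply: eq_wsum => Z _; ring. Qed.

Fixpoint lsum (K n : nat) (F : seq (seq bool) -> nat) : nat :=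
  if K is K'.+1 then wsum n (fun w => lsum K' n (fun ws => F (w :: ws))) else F [::].

Lemma lsumS K n F : lsum K.+1 n F = wsum n (fun w => lsum K n (fun ws => F (w :: ws))).
Proof. by []. Qed.

Definition shaped K n (ws : seq (seq bool)) := (size ws == K) && all (fun w => size w == n) ws.

Lemma eq_lsum K n F G :
  (forall ws, shaped K n ws -> F ws = G ws) -> lsum K n F = lsum K n G.
Proof.
elim: K F G => [|K IH] F G H /=; first exact: H.
apply: eq_wsum => w hw; apply: IH => ws hws; apply: H.
by move: hws; rewrite /shaped /= eqSS hw eqxx.
Qed.

Lemma lsumD K n F G : lsum K n (fun ws => F ws + G ws) = lsum K n F + lsum K n G.
Proof.
elim: K F G => [|K IH] F G //=.
by rewrite -wsumD; apply: eq_wsum => w _; exact: IH.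
Qed.

Lemma lsumM K n c F : lsum K n (fun ws => c * F ws) = c * lsum K n F.
Proof.
elim: K F => [|K IH] F //=.
by rewrite -wsumM; apply: eq_wsum => w _; exact: IH.
Qed.

Lemma lsum_wsum K n m F :
  lsum K n (fun ws => wsum m (fun w => F ws w)) = wsum m (fun w => lsum K n (fun ws => F ws w)).
Proof.
elim: K F => [|K IH] F //=.
rewrite (eq_wsum (G := fun w => wsum m (fun w' => lsum K n (fun ws => F (w :: ws) w'))));
  last by move=> w _; rewrite IH.
by rewrite wsum_swap.
Qed.

Lemma lsum_delta K n ws0 F :
  shaped K n ws0 -> lsum K n (fun ws => (ws == ws0) * F ws) = F ws0.
Proof.
elim: K ws0 F => [|K IH] [|w0 ws0] F //=; first by rewrite mul1n.
rewrite /shaped /= eqSS => /andP [hK /andP [hw hall]].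
transitivity (wsum n (fun w => (w == w0) * F (w :: ws0))); last first.
  by rewrite wsum_delta //; apply/eqP.
apply: eq_wsum => w hsz.
rewrite (eq_lsum (G := fun ws => (ws == ws0) * ((w == w0) * F (w :: ws)))); last first.
  move=> ws _; rewrite eqseq_cons.
  by case: (w == w0); case: (ws == ws0); rewrite /= ?mul0n ?mul1n.
by rewrite IH // /shaped hK.
Qed.

Lemma lsum_big (I : Type) (r : seq I) K n (F : I -> seq (seq bool) -> nat) :
  lsum K n (fun ws => \sum_(i <- r) F i ws) = \sum_(i <- r) lsum K n (F i).
Proof.
elim: r => [|i r IH].
  rewrite big_nil (eq_lsum (G := fun ws => 0 * 0)); last by move=> ws _; rewrite big_nil.
  by rewrite lsumM mul0n.
by rewrite big_cons -IH -lsumD; apply: eq_lsum => ws _; rewrite big_cons.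
Qed.

Definition bit_at (ws : seq (seq bool)) (k c : nat) : bool := nth false (nth [::] ws k) c.

Lemma shaped_eq K m xs ys : shaped K m xs -> shaped K m ys ->
  (forall k c, k < K -> c < m -> bit_at xs k c = bit_at ys k c) -> xs = ys.
Proof.
move=> /andP [/eqP sx ax] /andP [/eqP sy ay] H.
apply: (eq_from_nth (x0 := [::])); first by rewrite sx sy.
move=> k hk; rewrite sx in hk.
have hx : size (nth [::] xs k) = m by apply/eqP; apply: (allP ax); apply: mem_nth; rewrite sx.
have hy : size (nth [::] ys k) = m by apply/eqP; apply: (allP ay); apply: mem_nth; rewrite sy.
apply: (eq_from_nth (x0 := false)); first by rewrite hx hy.
by move=> c hc; rewrite hx in hc; exact: H.
Qed.

Lemma nseq_ext m (w : seq bool) b :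
  size w = m -> (forall c, c < m -> nth false w c = b) -> w = nseq m b.
Proof.
move=> hs H; apply: (eq_from_nth (x0 := false)); first by rewrite size_nseq.
by move=> c hc; rewrite nth_nseq -hs hc H // -hs.
Qed.

(* Local weights, indexed by (top, left, bottom, right) boundary states.
   [dcell a b] is the total weight of the edge sets of a single d-cell with
   weight a on NW, b on SE and 1 on NE, SW, such that the top vertex is
   covered once (counting coverage from above, top state), the bottom vertex
   is covered iff the bottom state holds, the left vertex is covered by the
   cell iff the left state holds, and the right vertex is covered once
   (counting coverage by the next cell, right state).  The entry
   [a * b + 1] is the one urban renewal acts on.  [gcell a] and [scell b]
   are the two gadgets into which a row of d-cells factors. *)
Definition dcell (a b : nat) (x f y g : bool) : nat :=
  match x, f, y, g with
  | false, false, false, false => 1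
  | true, true, true, true => 1
  | false, true, false, true => a
  | true, false, true, false => b
  | false, true, true, false => a * b + 1
  | true, false, false, true => 1
  | _, _, _, _ => 0
  end.

Definition gcell (a : nat) (x g z g' : bool) : nat :=
  match x, g, z, g' with
  | true, false, true, false => 1
  | true, false, false, true => 1
  | false, false, false, false => 1
  | false, true, true, false => a
  | false, true, false, true => a
  | _, _, _, _ => 0
  end.

Definition scell (b : nat) (z h y h' : bool) : nat :=
  match z, h, y, h' with
  | true, true, false, false => 1
  | true, true, true, true => b
  | true, false, true, false => 1
  | false, false, false, false => 1
  | false, false, true, true => b
  | _, _, _, _ => 0
  end.

Arguments dcell : simpl never.
Arguments gcell : simpl never.
Arguments scell : simpl never.

(* Weight of a row of cells with local weight [w], top word [X], bottom word
   [Y] and boundary states [f] (left) and [g] (right), summed over the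
   internal horizontal states. *)
Fixpoint row_tr (w : bool -> bool -> bool -> bool -> nat) (f : bool)
    (X Y : seq bool) (g : bool) : nat :=
  match X, Y with
  | [::], [::] => f == g
  | x :: X', y :: Y' =>
      w x f y false * row_tr w false X' Y' g + w x f y true * row_tr w true X' Y' g
  | _, _ => 0
  end.

(* The same for a staircase row whose top word is one letter longer than its
   bottom word; the last top letter must agree with the incoming state. *)
Fixpoint stair_tr (w : bool -> bool -> bool -> bool -> nat) (h : bool)
    (X Z : seq bool) : nat :=
  match X, Z with
  | x :: X', z :: Z' =>
      w x h z false * stair_tr w false X' Z' + w x h z true * stair_tr w true X' Z'
  | x :: X', [::] => nilp X' && (h == x)
  | [::], _ => 0
  end.

Definition transT a b X Y := row_tr (dcell a b) true X Y false.
Definition transG a X Z := if Z is z0 :: Z' then row_tr (gcell a) (~~ z0) X Z' false else 0.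
Definition transS b Z Y := stair_tr (scell b) false Z Y.

Section RowFactorizations.
Variables a b : nat.

(* [transG a * transS b] with arbitrary boundary states, so that it can be
   peeled off cell by cell. *)
Definition GS_gen g z h X Y :=
  wsum (size X) (fun Z => row_tr (gcell a) g X Z false * stair_tr (scell b) h (z :: Z) Y).

Lemma GS_gen_cons g z h x X y Y : GS_gen g z h (x :: X) (y :: Y) =
  gcell a x g false false * scell b z h y false * GS_gen false false false X Y +
  gcell a x g false false * scell b z h y true * GS_gen false false true X Y +
  gcell a x g false true * scell b z h y false * GS_gen true false false X Y +
  gcell a x g false true * scell b z h y true * GS_gen true false true X Y +
  (gcell a x g true false * scell b z h y false * GS_gen false true false X Y +
  gcell a x g true false * scell b z h y true * GS_gen false true true X Y +
  gcell a x g true true * scell b z h y false * GS_gen true true false X Y +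
  gcell a x g true true * scell b z h y true * GS_gen true true true X Y).
Proof. by rewrite /GS_gen /= wsumS /= !wsum_prod2. Qed.

(* The boundary-state version of [transT a b = transG a * transS b], proved
   by induction along the row. *)
Lemma GS_gen_rel X Y : size X = size Y ->
  [/\ GS_gen false true false X Y + GS_gen true false false X Y =
        row_tr (dcell a b) true X Y false,
      GS_gen false true true X Y + GS_gen true false true X Y =
        row_tr (dcell a b) false X Y false,
      GS_gen false false false X Y = row_tr (dcell a b) false X Y false &
      GS_gen false false true X Y = 0].
Proof.
elim: X Y => [|x X IH] [|y Y] //; try by move=> _; rewrite /GS_gen /= !wsumS !wsum0.
move=> /= [hs]; have [RA RB RC RD] := IH Y hs.
rewrite !GS_gen_cons RC RD -RB -RA.
by case: x; case: y; rewrite /gcell /scell /dcell; split; ring.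
Qed.

Lemma transT_GS X Y : size X = size Y ->
  transT a b X Y = wsum (size X).+1 (fun Z => transG a X Z * transS b Z Y).
Proof. by move=> hs; have [RA _ _ _] := GS_gen_rel hs; rewrite /transT -RA addnC. Qed.

Definition SG_gen h g X Y :=
  wsum (size Y) (fun Z => stair_tr (scell b) h X Z * row_tr (gcell a) g Z Y false).

Lemma SG_gen_cons h g x X y Y : SG_gen h g (x :: X) (y :: Y) =
  scell b x h false false * gcell a false g y false * SG_gen false false X Y +
  scell b x h false false * gcell a false g y true * SG_gen false true X Y +
  scell b x h false true * gcell a false g y false * SG_gen true false X Y +
  scell b x h false true * gcell a false g y true * SG_gen true true X Y +
  (scell b x h true false * gcell a true g y false * SG_gen false false X Y +
  scell b x h true false * gcell a true g y true * SG_gen false true X Y +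
  scell b x h true true * gcell a true g y false * SG_gen true false X Y +
  scell b x h true true * gcell a true g y true * SG_gen true true X Y).
Proof. by rewrite /SG_gen /= wsumS /= !wsum_prod2. Qed.

Definition Tcons f y X Y := row_tr (dcell a b) f X (y :: Y) false.

(* The boundary-state version of [transT a b = (ab+1) transS b * transG a];
   the factor [a * b + 1] is produced by the first cell of the row. *)
Lemma SG_gen_rel X Y : size X = (size Y).+1 ->
  [/\ (a * b + 1) * SG_gen false true X Y = Tcons true false X Y,
      (a * b + 1) * SG_gen false false X Y = Tcons true true X Y,
      SG_gen false false X Y + b * SG_gen true true X Y = Tcons false false X Y &
      b * SG_gen true false X Y = Tcons false true X Y].
Proof.
elim: Y X => [|y Y IH] [|x X] //=.
  case: X => // _; rewrite /SG_gen /Tcons /= !wsum0.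
  by case: x; rewrite /dcell /=; split; ring.
move=> [hs]; have [Q1 Q2 Q3 Q4] := IH X hs.
rewrite /Tcons in Q1 Q2 Q3 Q4; rewrite !SG_gen_cons /Tcons /=.
by case: y; rewrite -?Q1 -?Q2 -?Q3 -?Q4;
   case: x; rewrite /gcell /scell /dcell; split; ring.
Qed.

Lemma transT_SG X Y : size X = size Y -> 0 < size X ->
  transT a b X Y = (a * b + 1) * wsum (size X).-1 (fun Z => transS b X Z * transG a Z Y).
Proof.
case: Y => [|y0 Y] hs hpos; first by rewrite hs in hpos.
have hs' : size X = (size Y).+1 by rewrite hs.
have [Q1 Q2 _ _] := SG_gen_rel hs'.
rewrite /Tcons /SG_gen in Q1 Q2; rewrite hs' /transT /transG /transS /=.
by case: y0 {hs}; [rewrite -Q2 | rewrite -Q1].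
Qed.

End RowFactorizations.

Lemma transS_zero b n Z : size Z = n -> transS b (nseq n.+1 false) Z = (Z == nseq n false).
Proof.
move=> hs; suff: stair_tr (scell b) false (nseq n.+1 false) Z = (Z == nseq n false) /\
      stair_tr (scell b) true (nseq n.+1 false) Z = 0 by case.
elim: n Z hs => [|n IH] [|z Z] //= [hs].
have [E1 E2] := IH Z hs; move: E1 E2 => /= -> ->; rewrite eqseq_cons.
by case: z; rewrite /scell /=; split; lia.
Qed.

Lemma transG_one a n Z : size Z = n -> transG a Z (nseq n.+1 true) = (Z == nseq n true).
Proof.
rewrite /transG /=.
elim: n Z => [|n IH] [|z Z] //= [hs].
by rewrite IH // eqseq_cons; case: z; rewrite /gcell /=; lia.
Qed.

Definition renewal_factor (rs : seq (nat * nat)) := \prod_(r <- rs) (r.1 * r.2 + 1).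

Fixpoint chain n (rs : seq (nat * nat)) (X : seq bool) : nat :=
  if rs is r :: rs' then wsum n (fun Y => transT r.1 r.2 X Y * chain n rs' Y)
  else (X == nseq n true).

Fixpoint chain_SG m (rs : seq (nat * nat)) (X : seq bool) : nat :=
  if rs is r :: rs' then
    wsum m (fun Z => transS r.2 X Z * wsum m.+1 (fun Y => transG r.1 Z Y * chain_SG m rs' Y))
  else (X == nseq m.+1 true).

Lemma chain_SG_factor m rs X :
  size X = m.+1 -> chain m.+1 rs X = renewal_factor rs * chain_SG m rs X.
Proof.
elim: rs X => [|[a b] rs IH] X hX /=; first by rewrite /renewal_factor big_nil mul1n.
rewrite /renewal_factor big_cons -/(renewal_factor rs) /=.
transitivity (wsum m.+1 (fun Y => (a * b + 1) * renewal_factor rs *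
   wsum m (fun Z => transS b X Z * transG a Z Y * chain_SG m rs Y))).
  apply: eq_wsum => Y hY; rewrite IH // transT_SG ?hX ?hY //= -!mulnA.
  by congr (_ * _); rewrite mulnCA -wsumMr.
rewrite wsumM -!mulnA; do 2 congr (_ * _).
rewrite wsum_swap; apply: eq_wsum => Z _.
by rewrite -wsumM; apply: eq_wsum => Y _; ring.
Qed.

(* Pair the NW weight of each row with the SE weight of the next one; the
   first argument is the NW weight carried over from the previous row. *)
Fixpoint shift_rows (a : nat) (rs : seq (nat * nat)) : seq (nat * nat) :=
  if rs is r :: rs' then (a, r.2) :: shift_rows r.1 rs' else [::].

Lemma chain_SG_regroup m a rs Z : size Z = m ->
  wsum m.+1 (fun Y => transG a Z Y * chain_SG m rs Y) = chain m (shift_rows a rs) Z.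
Proof.
elim: rs a Z => [|[a' b'] rs IH] a Z hZ /=.
  rewrite (eq_wsum (G := fun Y => (Y == nseq m.+1 true) * transG a Z Y)); last first.
    by move=> Y _; rewrite mulnC.
  by rewrite wsum_delta ?size_nseq // transG_one.
transitivity (wsum m (fun Z' => wsum m.+1 (fun Y => transG a Z Y * transS b' Y Z') *
     wsum m.+1 (fun Y => transG a' Z' Y * chain_SG m rs Y))).
  rewrite (eq_wsum (G := fun Y => wsum m (fun Z' => transG a Z Y * transS b' Y Z' *
      wsum m.+1 (fun Y0 => transG a' Z' Y0 * chain_SG m rs Y0)))); last first.
    by move=> Y _; rewrite -wsumM; apply: eq_wsum => Z' _; ring.
  by rewrite wsum_swap; apply: eq_wsum => Z' _; rewrite -wsumMr.
by apply: eq_wsum => Z' hZ'; rewrite IH // -hZ transT_GS // hZ hZ'.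
Qed.

Lemma chain_renewal m r rs :
  chain m.+1 (r :: rs) (nseq m.+1 false) =
  renewal_factor (r :: rs) * chain m (shift_rows r.1 rs) (nseq m false).
Proof.
rewrite chain_SG_factor ?size_nseq //=; congr (_ * _).
rewrite (eq_wsum (G := fun Z => (Z == nseq m false) *
   wsum m.+1 (fun Y => transG r.1 Z Y * chain_SG m rs Y))); last first.
  by move=> Z hZ; rewrite transS_zero.
by rewrite wsum_delta ?size_nseq // chain_SG_regroup ?size_nseq.
Qed.

(* The weight of a row of [m] cells with top word [X], bottom word [Y] and a
   fixed word [F] of horizontal states, whose first state is true (the
   leftmost vertex is covered inside the row) and whose last is false. *)
Definition row_weight (w : bool -> bool -> bool -> bool -> nat) m (X F Y : seq bool) : nat :=
  nth false F 0 * ~~ nth false F m *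
  \prod_(j < m) w (nth false X j) (nth false F j) (nth false Y j) (nth false F j.+1).

Lemma row_tr_states w m X Y s t : size X = m -> size Y = m ->
  wsum m.+1 (fun F => (nth false F 0 == s) * (nth false F m == t) *
     \prod_(j < m) w (nth false X j) (nth false F j) (nth false Y j) (nth false F j.+1))
  = row_tr w s X Y t.
Proof.
elim: m X Y s t => [|m IH] [|x X] [|y Y] s t //.
  by move=> _ _; rewrite wsumS !wsum0 /= !big_ord0; case: s; case: t.
move=> [hX] [hY].
rewrite /= -(IH X Y false t hX hY) -(IH X Y true t hX hY) -!wsumM wsumS -!wsumD.
apply: eq_wsum => F _; rewrite !big_ord_recl /=.
by case: s; case: (nth false F 0); rewrite /= ?mul0n ?mul1n ?add0n ?addn0 ?muln0; ring.
Qed.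

Lemma row_weight_sum w m X Y : size X = m -> size Y = m ->
  wsum m.+1 (fun F => row_weight w m X F Y) = row_tr w true X Y false.
Proof.
move=> hX hY; rewrite -(row_tr_states w true false hX hY); apply: eq_wsum => F _.
by rewrite /row_weight; case: (nth false F 0); case: (nth false F m).
Qed.

Lemma chain_rows n K (r : nat -> nat * nat) s X : size X = n ->
  lsum K n (fun xs => lsum K n.+1 (fun fs => (nth [::] (X :: xs) K == nseq n true) *
     \prod_(i < K) row_weight (dcell (r (s + i)).1 (r (s + i)).2) n
                     (nth [::] (X :: xs) i) (nth [::] fs i) (nth [::] (X :: xs) i.+1)))
  = chain n [seq r i | i <- iota s K] X.
Proof.
elim: K r s X => [|K IH] r s X hX; first by rewrite /= big_ord0 muln1.
rewrite /= -/(iota s.+1 K) /=; apply: eq_wsum => Y hY.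
transitivity (lsum K n (fun xs => wsum n.+1 (fun F =>
   row_weight (dcell (r s).1 (r s).2) n X F Y *
   lsum K n.+1 (fun fs => (nth [::] (Y :: xs) K == nseq n true) *
     \prod_(i < K) row_weight (dcell (r (s.+1 + i)).1 (r (s.+1 + i)).2) n
                     (nth [::] (Y :: xs) i) (nth [::] fs i) (nth [::] (Y :: xs) i.+1))))).
  apply: eq_lsum => xs _; apply: eq_wsum => F _.
  rewrite -lsumM; apply: eq_lsum => fs _; rewrite big_ord_recl /= addn0.
  rewrite (eq_bigr (fun i : 'I_K => row_weight (dcell (r (s.+1 + i)).1 (r (s.+1 + i)).2) n
             (nth [::] (Y :: xs) i) (nth [::] fs i) (nth [::] (Y :: xs) i.+1)));
    last by move=> i _; rewrite /bump /= addnS.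
  ring.
rewrite lsum_wsum (eq_wsum (G := fun F => row_weight (dcell (r s).1 (r s).2) n X F Y *
                                chain n [seq r i | i <- iota s.+1 K] Y)); last first.
  by move=> F _; rewrite lsumM IH.
by rewrite wsumMr row_weight_sum.
Qed.

Lemma inordv (m : nat) (i : 'I_m.+1) : inord (nat_of_ord i) = i.
Proof. by apply: val_inj; rewrite /= inordK. Qed.

Lemma inord_eqm (m : nat) (k : 'I_m.+1) (p : nat) :
  p < m.+1 -> (k == inord p) = (k == p :> nat).
Proof. by move=> h; rewrite -(inj_eq val_inj) /= inordK. Qed.

Lemma sum_pick (m : nat) (F : 'I_m.+1 -> nat) (p : nat) :
  \sum_(i : 'I_m.+1) (p == i) * F i = if p < m.+1 then F (inord p) else 0.
Proof.
case: ltnP => hp.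
- rewrite (bigD1 (inord p)) //= inordK // eqxx mul1n big1 ?addn0 //.
  move=> i hi; case: (eqVneq p i) => [e|]; last by rewrite mul0n.
  by move: hi; rewrite e inordv eqxx.
- rewrite big1 // => i _.
  have: p != i by apply/eqP => e; move: (ltn_ord i); rewrite -e ltnNge hp.
  by move/negPf ->.
Qed.

Lemma pick_ord (T : finType) (c : T) (F : T -> nat) : \sum_(j : T) (c == j) * F j = F c.
Proof.
rewrite (bigD1 c) //= eqxx mul1n big1 ?addn0 // => j hj.
by rewrite eq_sym (negPf hj).
Qed.

Lemma sum_pick1 (m : nat) (k : 'I_m.+2) (F : 'I_m.+1 -> nat) :
  \sum_(i : 'I_m.+1) (k == i + 1 :> nat) * F i = (if 0 < k then F (inord k.-1) else 0).
Proof.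
have hk := ltn_ord k.
transitivity (\sum_(i : 'I_m.+1) (0 < k) * ((k.-1 == i) * F i)).
  apply: eq_bigr => i _; have [->|kp] := posnP k; first by rewrite /= addn1.
  by rewrite mul1n -{1}(prednK kp) addn1 eqSS.
rewrite -big_distrr /= sum_pick; have [->|kp] := posnP k; first by [].
by rewrite mul1n; have -> : k.-1 < m.+1 by lia.
Qed.

Section Configurations.
Variable n' : nat.
Local Notation n := n'.+1.

Definition cell_conf := (bool * bool * bool * bool)%type.

Definition conf_edge (l : cell_conf) (a b : bool) : bool :=
  let: (nw, ne, sw, se) := l in
  match a, b with
  | false, false => nw | false, true => ne | true, false => sw | true, true => se end.

Definition conf_set (L : {ffun 'I_n * 'I_n -> cell_conf}) : {set ad_edge n} :=
  [set e : ad_edge n | let: (i, j, a, b) := e in conf_edge (L (i, j)) a b].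

Definition conf_of_set (S : {set ad_edge n}) : {ffun 'I_n * 'I_n -> cell_conf} :=
  [ffun c => ((c.1, c.2, false, false) \in S, (c.1, c.2, false, true) \in S,
              (c.1, c.2, true, false) \in S, (c.1, c.2, true, true) \in S)].

Lemma conf_set_bij : bijective conf_set.
Proof.
exists conf_of_set.
- move=> L; apply/ffunP => [[i j]]; rewrite ffunE /= !inE /=.
  by case: (L (i, j)) => [[[? ?] ?] ?].
- move=> S; apply/setP => [[[[i j] a] b]]; rewrite !inE ffunE /=.
  by case: a; case: b.
Qed.

Definition cell_edge (L : {ffun 'I_n * 'I_n -> cell_conf}) (i j : nat) a b :=
  conf_edge (L (inord i, inord j)) a b.

(* The number of chosen edges at the vertex between the cells (k-1, c) and
   (k, c), resp. between the cells (r, k-1) and (r, k). *)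
Definition deg_v L k c :=
  (if k < n then cell_edge L k c false false + cell_edge L k c false true else 0) +
  (if 0 < k then cell_edge L k.-1 c true false + cell_edge L k.-1 c true true else 0).
Definition deg_h L k r :=
  (if k < n then cell_edge L r k false false + cell_edge L r k true false else 0) +
  (if 0 < k then cell_edge L r k.-1 false true + cell_edge L r k.-1 true true else 0).

Lemma sum_edges (F : ad_edge n -> nat) :
  \sum_(e : ad_edge n) F e =
  \sum_(i : 'I_n) \sum_(j : 'I_n) \sum_(a : bool) \sum_(b : bool) F (i, j, a, b).
Proof. by symmetry; rewrite !pair_bigA /=; apply: eq_bigr => [[[[i j] a] b]] _. Qed.

Lemma card_incident (S : {set ad_edge n}) v :
  #|[set e in S | incident e v]| = \sum_(e : ad_edge n) ((e \in S) && incident e v).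
Proof.
rewrite -sum1_card big_mkcond /=; apply: eq_bigr => e _.
by rewrite inE; case: (_ && _).
Qed.

Lemma card_incident_vert L (k : 'I_n.+1) (c : 'I_n) :
  #|[set e in conf_set L | incident e (true, k, c)]| = deg_v L k c.
Proof.
rewrite card_incident sum_edges.
transitivity (\sum_(i : 'I_n) \sum_(j : 'I_n) (c == j) *
   ((k == i :> nat) * (conf_edge (L (i, j)) false false + conf_edge (L (i, j)) false true) +
    (k == i + 1 :> nat) * (conf_edge (L (i, j)) true false + conf_edge (L (i, j)) true true))).
  apply: eq_bigr => i _; apply: eq_bigr => j _.
  rewrite !big_bool /= /incident /= !inE /= !xpair_eqE /=.
  have h0 : i + 0 < n.+1 by have := ltn_ord i; lia.
  have h1 : i + 1 < n.+1 by have := ltn_ord i; lia.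
  rewrite !inord_eqm // addn0.
  case: (c == j); case: (k == i :> nat); case: (k == i + 1 :> nat);
  by case: (conf_edge _ true true); case: (conf_edge _ true false);
     case: (conf_edge _ false true); case: (conf_edge _ false false).
rewrite exchange_big /= (eq_bigr (fun j => (c == j) * \sum_(i : 'I_n)
    ((k == i :> nat) * (conf_edge (L (i, j)) false false + conf_edge (L (i, j)) false true) +
     (k == i + 1 :> nat) * (conf_edge (L (i, j)) true false + conf_edge (L (i, j)) true true))));
  last by move=> j _; rewrite big_distrr.
rewrite pick_ord big_split /= sum_pick sum_pick1 /deg_v /cell_edge inordv.
by case: (k < n); case: (0 < k).
Qed.

Lemma card_incident_horz L (k : 'I_n.+1) (r : 'I_n) :
  #|[set e in conf_set L | incident e (false, k, r)]| = deg_h L k r.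
Proof.
rewrite card_incident sum_edges.
transitivity (\sum_(i : 'I_n) (r == i) * \sum_(j : 'I_n)
   ((k == j :> nat) * (conf_edge (L (i, j)) false false + conf_edge (L (i, j)) true false) +
    (k == j + 1 :> nat) * (conf_edge (L (i, j)) false true + conf_edge (L (i, j)) true true))).
  apply: eq_bigr => i _; rewrite big_distrr /=; apply: eq_bigr => j _.
  rewrite !big_bool /= /incident /= !inE /= !xpair_eqE /=.
  have h0 : j + 0 < n.+1 by have := ltn_ord j; lia.
  have h1 : j + 1 < n.+1 by have := ltn_ord j; lia.
  rewrite !inord_eqm // addn0.
  case: (r == i); case: (k == j :> nat); case: (k == j + 1 :> nat);
  by case: (conf_edge _ true true); case: (conf_edge _ true false);
     case: (conf_edge _ false true); case: (conf_edge _ false false).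
rewrite pick_ord big_split /= sum_pick sum_pick1 /deg_h /cell_edge inordv.
by case: (k < n); case: (0 < k).
Qed.

Definition pm_degrees L := (forall k c, k <= n -> c < n -> deg_v L k c = 1) /\
                           (forall k r, k <= n -> r < n -> deg_h L k r = 1).

Lemma pm_degreesP L : reflect (pm_degrees L) (perfect_matching (conf_set L)).
Proof.
apply: (iffP forallP).
- move=> H; split.
  + move=> k c hk hc; have := H (true, inord k, inord c).
    by rewrite card_incident_vert !inordK ?ltnS // => /eqP.
  + move=> k r hk hr; have := H (false, inord k, inord r).
    by rewrite card_incident_horz !inordK ?ltnS // => /eqP.
- move=> [HV HH] [[[] k] c]; apply/eqP.
  + by rewrite card_incident_vert; apply: HV; rewrite // -ltnS.
  + by rewrite card_incident_horz; apply: HH; rewrite // -ltnS.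
Qed.

Definition cell_ok (l : cell_conf) (xt fl yb fr : bool) : bool :=
  [&& conf_edge l false false + conf_edge l false true + xt == 1,
      conf_edge l true false + conf_edge l true true == yb,
      conf_edge l false false + conf_edge l true false == fl &
      conf_edge l false true + conf_edge l true true + fr == 1].

(* The boundary of AD_n: nothing enters from above, everything is covered at
   the bottom, the leftmost horizontal vertex of a row is covered inside the
   row and the rightmost one is not covered by a further cell. *)
Definition boundary_ok (xs fs : seq (seq bool)) : bool :=
  [&& nth [::] xs 0 == nseq n false, nth [::] xs n == nseq n true &
      [forall r : 'I_n, bit_at fs r 0 && ~~ bit_at fs r n]].

Definition consistent xs fs (L : {ffun 'I_n * 'I_n -> cell_conf}) : bool :=
  boundary_ok xs fs && [forall c : 'I_n * 'I_n,
     cell_ok (L c) (bit_at xs c.1 c.2) (bit_at fs c.1 c.2)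
                   (bit_at xs c.1.+1 c.2) (bit_at fs c.1 c.2.+1)].

Definition vstates L := mkseq (fun k => mkseq (fun c =>
   (0 < k) && (cell_edge L k.-1 c true false || cell_edge L k.-1 c true true)) n) n.+1.
Definition hstates L := mkseq (fun r => mkseq (fun k =>
   (k < n) && (cell_edge L r k false false || cell_edge L r k true false)) n.+1) n.

Lemma bit_vstates L k c : k < n.+1 -> c < n ->
  bit_at (vstates L) k c =
  (0 < k) && (cell_edge L k.-1 c true false || cell_edge L k.-1 c true true).
Proof. by move=> hk hc; rewrite /bit_at /vstates nth_mkseq // nth_mkseq. Qed.

Lemma bit_hstates L r k : r < n -> k < n.+1 ->
  bit_at (hstates L) r k = (k < n) && (cell_edge L r k false false || cell_edge L r k true false).
Proof. by move=> hr hk; rewrite /bit_at /hstates nth_mkseq // nth_mkseq. Qed.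

Lemma shaped_vstates L : shaped n.+1 n (vstates L).
Proof.
rewrite /shaped /vstates size_mkseq eqxx andTb; apply/allP => w /mapP [k _ ->].
by rewrite size_mkseq.
Qed.

Lemma shaped_hstates L : shaped n n.+1 (hstates L).
Proof.
rewrite /shaped /hstates size_mkseq eqxx andTb; apply/allP => w /mapP [k _ ->].
by rewrite size_mkseq.
Qed.

Lemma consistentP xs fs L : consistent xs fs L ->
  [/\ forall c, c < n -> bit_at xs 0 c = false,
      forall c, c < n -> bit_at xs n c = true,
      forall r, r < n -> bit_at fs r 0 = true,
      forall r, r < n -> bit_at fs r n = false &
      forall i j, i < n -> j < n ->
        [/\ cell_edge L i j false false + cell_edge L i j false true + bit_at xs i j = 1,
            cell_edge L i j true false + cell_edge L i j true true = bit_at xs i.+1 j,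
            cell_edge L i j false false + cell_edge L i j true false = bit_at fs i j &
            cell_edge L i j false true + cell_edge L i j true true + bit_at fs i j.+1 = 1]].
Proof.
move=> /andP [/and3P [/eqP h0 /eqP hn /forallP hf] /forallP hc]; split.
- by move=> c hc'; rewrite /bit_at h0 nth_nseq hc'.
- by move=> c hc'; rewrite /bit_at hn nth_nseq hc'.
- by move=> r hr; have := hf (inord r); rewrite inordK // => /andP [].
- by move=> r hr; have := hf (inord r); rewrite inordK // => /andP [_ /negPf].
- move=> i j hi hj; have := hc (inord i, inord j); rewrite /= !inordK // /cell_edge.
  by move=> /and4P [/eqP -> /eqP -> /eqP -> /eqP ->].
Qed.

(* A consistent configuration is a perfect matching: the degree of each
   vertex is read off the states around it. *)
Lemma consistent_pm xs fs L : consistent xs fs L -> pm_degrees L.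
Proof.
move=> hcons; have [h0 hn f0 fn loc] := consistentP hcons; split.
- move=> k c hk hc; rewrite /deg_v.
  case: k hk => [|k] hk /=.
    by have [l1 _ _ _] := loc 0 c (ltn0Sn _) hc; have := h0 c hc; lia.
  case: ifP => hlt.
    have [l1 _ _ _] := loc k.+1 c hlt hc.
    by have [_ l2 _ _] := loc k c (ltnW hlt) hc; lia.
  have e : k = n' by move: hlt hk; lia.
  by subst k; have [_ l2 _ _] := loc n' c (ltnSn _) hc; have := hn c hc; lia.
- move=> k r hk hr; rewrite /deg_h.
  case: k hk => [|k] hk /=.
    by have [_ _ l3 _] := loc r 0 hr (ltn0Sn _); have := f0 r hr; lia.
  case: ifP => hlt.
    have [_ _ l3 _] := loc r k.+1 hr hlt.
    by have [_ _ _ l4] := loc r k hr (ltnW hlt); lia.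
  have e : k = n' by move: hlt hk; lia.
  by subst k; have [_ _ _ l4] := loc r n' hr (ltnSn _); have := fn r hr; lia.
Qed.

Lemma consistent_states xs fs L : consistent xs fs L ->
  shaped n.+1 n xs -> shaped n n.+1 fs -> xs = vstates L /\ fs = hstates L.
Proof.
move=> hcons sx sf; have [h0 _ _ fn loc] := consistentP hcons; split.
- apply: (shaped_eq sx (shaped_vstates L)) => k c hk hc; rewrite bit_vstates //.
  case: k hk => [|i] hk /=; first exact: h0.
  have [_ l2 _ _] := loc i c hk hc; move: l2.
  by case: (cell_edge L i c true false); case: (cell_edge L i c true true);
     case: (bit_at xs i.+1 c).
- apply: (shaped_eq sf (shaped_hstates L)) => r k hr hk; rewrite bit_hstates //.
  case: (ltnP k n) => hkn /=; last by rewrite (_ : k = n) ?fn //; lia.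
  have [_ _ l3 _] := loc r k hr hkn; move: l3.
  by case: (cell_edge L r k false false); case: (cell_edge L r k true false);
     case: (bit_at fs r k).
Qed.

Lemma states_consistent L : pm_degrees L -> consistent (vstates L) (hstates L) L.
Proof.
move=> [HV HH]; apply/andP; split.
- apply/and3P; split.
  + apply/eqP; apply: nseq_ext; first by rewrite /vstates nth_mkseq // size_mkseq.
    by move=> c hc; have := bit_vstates L (ltn0Sn _) hc.
  + apply/eqP; apply: nseq_ext; first by rewrite /vstates nth_mkseq // size_mkseq.
    move=> c hc; have := bit_vstates L (ltnSn _) hc; rewrite /bit_at => -> /=.
    by have := HV n c (leqnn _) hc; rewrite /deg_v ltnn /=; lia.
  + apply/forallP => r; rewrite !bit_hstates // ltnn /= andbT.
    by have := HH 0 r (leq0n _) (ltn_ord r); rewrite /deg_h /=; lia.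
- apply/forallP => [[i j]] /=.
  have hi := ltn_ord i; have hj := ltn_ord j.
  have hi1 : i < n.+1 by lia.
  have hi2 : i.+1 < n.+1 by lia.
  have hj1 : j < n.+1 by lia.
  have hj2 : j.+1 < n.+1 by lia.
  rewrite (bit_vstates L hi1 hj) (bit_vstates L hi2 hj) (bit_hstates L hi hj1).
  rewrite (bit_hstates L hi hj2) /= /cell_ok.
  have dv1 := HV i j (ltnW hi) hj; have dv2 := HV i.+1 j hi hj.
  have dh1 := HH j i (ltnW hj) hi; have dh2 := HH j.+1 i hj hi.
  move: dv1 dv2 dh1 dh2; rewrite /deg_v /deg_h /cell_edge /= !inordv hi hj /=.
  move=> dv1 dv2 dh1 dh2; apply/and4P; split.
  - by move: dv1; case: (0 < i) => /=; lia.
  - by move: dv2; case: (i.+1 < n) => /=; lia.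
  - by move: dh1; case: (0 < j) => /=; lia.
  - by move: dh2; case: (j.+1 < n) => /=; lia.
Qed.

Lemma consistentE xs fs L : shaped n.+1 n xs -> shaped n n.+1 fs ->
  consistent xs fs L = [&& xs == vstates L, fs == hstates L & perfect_matching (conf_set L)].
Proof.
move=> sx sf; apply/idP/idP.
- move=> hc; have [-> ->] := consistent_states hc sx sf.
  by rewrite !eqxx /=; apply/pm_degreesP; exact: consistent_pm hc.
- by case/and3P => /eqP -> /eqP -> /pm_degreesP; exact: states_consistent.
Qed.

Lemma sum_consistent L :
  lsum n.+1 n (fun xs => lsum n n.+1 (fun fs => consistent xs fs L)) =
  perfect_matching (conf_set L).
Proof.
transitivity (lsum n.+1 n (fun xs => (xs == vstates L) *
   lsum n n.+1 (fun fs => (fs == hstates L) * (perfect_matching (conf_set L) : nat)))).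
  apply: eq_lsum => xs sx; rewrite -lsumM; apply: eq_lsum => fs sf.
  rewrite consistentE //.
  by case: (xs == _); case: (fs == _); case: (perfect_matching _).
by rewrite lsum_delta ?shaped_vstates // lsum_delta ?shaped_hstates.
Qed.

End Configurations.

Lemma forall_prod (T : finType) (P : pred T) :
  ([forall c, P c] : nat) = \prod_(c : T) (P c : nat).
Proof.
case: (boolP [forall c, P c]) => h; first by rewrite big1 // => c _; rewrite (forallP h).
have [c hc] : exists c, ~~ P c by apply/existsP; rewrite -negb_forall.
by rewrite (bigD1 c) //= (negPf hc) mul0n.
Qed.

Section WeightedMatchings.
Variable n' : nat.
Local Notation n := n'.+1.
Variable W : nat -> nat -> nat.
Variables alpha beta : nat -> nat.

Definition cell_wt i (a b : bool) : nat :=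
  match a, b with false, false => alpha i | true, true => beta i | _, _ => 1 end.
Hypothesis W_cells :
  forall i j (a b : bool), i < n -> j < n -> W (i.*2 + a) (j.*2 + b) = cell_wt i a b.

Definition conf_weight (c : 'I_n * 'I_n) (l : cell_conf) : nat :=
  \prod_(a : bool) \prod_(b : bool)
     (if conf_edge l a b then W (c.1.*2 + a) (c.2.*2 + b) else 1).

Lemma prod_conf_set L :
  \prod_(e in conf_set L) W (e_row e) (e_col e) = \prod_(c : 'I_n * 'I_n) conf_weight c (L c).
Proof.
rewrite big_mkcond /=; symmetry; rewrite /conf_weight pair_bigA pair_bigA /=.
by apply: eq_bigr => [[[[i j] a] b]] _; rewrite inE.
Qed.

Lemma sum_conf (F : cell_conf -> nat) :
  \sum_(l : cell_conf) F l =
  \sum_(a : bool) \sum_(b : bool) \sum_(c : bool) \sum_(d : bool) F (a, b, c, d).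
Proof. by symmetry; rewrite !pair_bigA /=; apply: eq_bigr => [[[[a b] c] d]] _. Qed.

Lemma sum_conf_cell (c : 'I_n * 'I_n) xt fl yb fr :
  \sum_(l : cell_conf) cell_ok l xt fl yb fr * conf_weight c l =
  dcell (alpha c.1) (beta c.1) xt fl yb fr.
Proof.
case: c => i j /=; rewrite sum_conf !big_bool /conf_weight !big_bool /=.
rewrite (W_cells false false (ltn_ord i) (ltn_ord j)) (W_cells false true (ltn_ord i) (ltn_ord j)).
rewrite (W_cells true false (ltn_ord i) (ltn_ord j)) (W_cells true true (ltn_ord i) (ltn_ord j)).
by case: xt; case: fl; case: yb; case: fr; rewrite /cell_ok /dcell /=; ring.
Qed.

Definition state_weight xs fs :=
  \prod_(c : 'I_n * 'I_n) dcell (alpha c.1) (beta c.1)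
     (bit_at xs c.1 c.2) (bit_at fs c.1 c.2) (bit_at xs c.1.+1 c.2) (bit_at fs c.1 c.2.+1).

Lemma sum_conf_all xs fs :
  \sum_(L : {ffun 'I_n * 'I_n -> cell_conf})
     consistent xs fs L * \prod_(c : 'I_n * 'I_n) conf_weight c (L c) =
  boundary_ok n' xs fs * state_weight xs fs.
Proof.
transitivity (\sum_(L : {ffun 'I_n * 'I_n -> cell_conf}) boundary_ok n' xs fs *
   \prod_(c : 'I_n * 'I_n) (cell_ok (L c) (bit_at xs c.1 c.2) (bit_at fs c.1 c.2)
      (bit_at xs c.1.+1 c.2) (bit_at fs c.1 c.2.+1) * conf_weight c (L c))).
  apply: eq_bigr => L _; rewrite /consistent big_split /= -forall_prod.
  by case: (boundary_ok _ _ _); rewrite /= ?mul1n ?mul0n ?mulnA.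
rewrite -big_distrr /= /state_weight; congr (_ * _); symmetry.
rewrite (eq_bigr (fun c : 'I_n * 'I_n => \sum_(l : cell_conf)
     cell_ok l (bit_at xs c.1 c.2) (bit_at fs c.1 c.2) (bit_at xs c.1.+1 c.2)
       (bit_at fs c.1 c.2.+1) * conf_weight c l)); last by move=> c _; rewrite sum_conf_cell.
by rewrite bigA_distr_bigA.
Qed.

(* M(AD_n) as a sum over states: every perfect matching has exactly one
   consistent family of states, and summing over the configurations
   consistent with given states factors over the cells. *)
Lemma Mw_states :
  Mw n W = lsum n.+1 n (fun xs => lsum n n.+1 (fun fs => boundary_ok n' xs fs * state_weight xs fs)).
Proof.
rewrite /Mw (reindex (@conf_set n')) /=; last first.
  by case: (@conf_set_bij n') => g h1 h2; exists g => x _; [exact: h1 | exact: h2].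
transitivity (\sum_(L : {ffun 'I_n * 'I_n -> cell_conf})
   (perfect_matching (conf_set L) : nat) * \prod_(c : 'I_n * 'I_n) conf_weight c (L c)).
  rewrite big_mkcond /=; apply: eq_bigr => L _; rewrite prod_conf_set.
  by case: (perfect_matching _); rewrite ?mul1n ?mul0n.
transitivity (\sum_(L : {ffun 'I_n * 'I_n -> cell_conf}) lsum n.+1 n (fun xs =>
   lsum n n.+1 (fun fs => consistent xs fs L * \prod_(c : 'I_n * 'I_n) conf_weight c (L c)))).
  apply: eq_bigr => L _; rewrite -sum_consistent mulnC -lsumM; apply: eq_lsum => xs _.
  by rewrite -lsumM; apply: eq_lsum => fs _; rewrite mulnC.
rewrite -lsum_big.
transitivity (lsum n.+1 n (fun xs => lsum n n.+1 (fun fs => boundary_ok n' xs fs *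
   state_weight xs fs))) => //.
by apply: eq_lsum => xs _; rewrite -lsum_big; apply: eq_lsum => fs _; exact: sum_conf_all.
Qed.

Lemma boundary_rows xs fs :
  boundary_ok n' xs fs * state_weight xs fs =
  (nth [::] xs 0 == nseq n false) * ((nth [::] xs n == nseq n true) *
     \prod_(i < n) row_weight (dcell (alpha (0 + i)) (beta (0 + i))) n
                     (nth [::] xs i) (nth [::] fs i) (nth [::] xs i.+1)).
Proof.
transitivity ((nth [::] xs 0 == nseq n false) * ((nth [::] xs n == nseq n true) *
   \prod_(i < n) (bit_at fs i 0 * ~~ bit_at fs i n)) * \prod_(i < n) \prod_(j < n)
   dcell (alpha i) (beta i) (bit_at xs i j) (bit_at fs i j) (bit_at xs i.+1 j) (bit_at fs i j.+1)).
  rewrite /state_weight pair_bigA /= /boundary_ok; congr (_ * _).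
  rewrite (eq_bigr (fun i : 'I_n => ((bit_at fs i 0 && ~~ bit_at fs i n) : nat))); last first.
    by move=> i _; case: (bit_at fs i 0); case: (bit_at fs i n).
  rewrite -forall_prod.
  by case: (_ == _); case: (_ == _); case: [forall _, _]; rewrite /= ?mul0n ?muln0.
rewrite /row_weight (eq_bigr (fun i : 'I_n => (bit_at fs i 0 * ~~ bit_at fs i n) * \prod_(j < n)
   dcell (alpha i) (beta i) (bit_at xs i j) (bit_at fs i j) (bit_at xs i.+1 j) (bit_at fs i j.+1))
   (P := xpredT)
   (F1 := fun i : 'I_n => nth false (nth [::] fs i) 0 * ~~ nth false (nth [::] fs i) n *
      \prod_(j < n) dcell (alpha (0 + i)) (beta (0 + i)) (nth false (nth [::] xs i) j)
        (nth false (nth [::] fs i) j) (nth false (nth [::] xs i.+1) j)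
        (nth false (nth [::] fs i) j.+1)));
  last by move=> i _; rewrite add0n.
by rewrite !big_split /=; ring.
Qed.

Theorem Mw_chain :
  Mw n W = chain n [seq (alpha i, beta i) | i <- iota 0 n] (nseq n false).
Proof.
rewrite Mw_states lsumS.
transitivity (wsum n (fun X => (X == nseq n false) * lsum n n (fun xs => lsum n n.+1 (fun fs =>
   (nth [::] (X :: xs) n == nseq n true) *
   \prod_(i < n) row_weight (dcell (alpha (0 + i)) (beta (0 + i))) n
                   (nth [::] (X :: xs) i) (nth [::] fs i) (nth [::] (X :: xs) i.+1))))).
  apply: eq_wsum => X _; rewrite -lsumM; apply: eq_lsum => xs _; rewrite -lsumM.
  by apply: eq_lsum => fs _; exact: boundary_rows.
by rewrite wsum_delta ?size_nseq // (chain_rows n (fun i => (alpha i, beta i)) 0 (size_nseq n false)).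
Qed.

End WeightedMatchings.

Lemma wt_bbmat m s r c : r < m.*2 ->
  wt (bbmat m s) r c = sign_entry (nth sZero s r./2) (odd r) (odd c).
Proof.
move=> hr; rewrite /wt.
have hr' : r %% m.*2 < m.*2 by rewrite modn_small.
have hc' : c %% 2 < 2 by rewrite ltn_mod.
rewrite (insubT (fun x => x < m.*2) hr') (insubT (fun x => x < 2) hc') mxE /=.
by rewrite modn_small // modn2.
Qed.

Lemma half_double_bit i (a : bool) : (i.*2 + a)./2 = i.
Proof. by rewrite addnC half_bit_double. Qed.

Lemma odd_double_bit i (a : bool) : odd (i.*2 + a) = a.
Proof. by rewrite oddD odd_double oddb. Qed.

Lemma code_bbmat m s : size s = m -> code (bbmat m s) = s.
Proof.
move=> hs; apply: (eq_from_nth (x0 := sZero)); first by rewrite size_map size_iota.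
move=> i; rewrite size_map size_iota => hi.
rewrite (nth_map 0) ?size_iota // nth_iota // add0n.
have h0 : i.*2 < m.*2 by rewrite ltn_double.
have h1 : i.*2.+1 < m.*2 by rewrite -doubleS leq_double.
rewrite (wt_bbmat s 0 h0) (wt_bbmat s 1 h0) (wt_bbmat s 0 h1) (wt_bbmat s 1 h1).
rewrite doubleK (half_bit_double i true) /= odd_double /=.
by case: (nth sZero s i).
Qed.

(* The NW and SE entries of the block coded by a sign; the NE and SW entries
   are always 1. *)
Definition nw_entry (x : bsign) : nat := sign_entry x 0 0.
Definition se_entry (x : bsign) : nat := sign_entry x 1 1.

Lemma wt_bbmat_cell m s n' : n'.+1 <= m -> forall i j (a b : bool), i < n'.+1 -> j < n'.+1 ->
  wt (bbmat m s) (i.*2 + a) (j.*2 + b) =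
  cell_wt (fun i => nw_entry (nth sZero s i)) (fun i => se_entry (nth sZero s i)) i a b.
Proof.
move=> hm i j a b hi hj.
have hr : i.*2 + a < m.*2 by case: a => /=; rewrite -!muln2; lia.
rewrite wt_bbmat // half_double_bit !odd_double_bit /cell_wt /nw_entry /se_entry.
by case: a {hr}; case: b; case: (nth sZero s i).
Qed.

Lemma shift_rows_map (alpha beta : nat -> nat) k K :
  shift_rows (alpha k) [seq (alpha i, beta i) | i <- iota k.+1 K] =
  [seq (alpha i, beta i.+1) | i <- iota k K].
Proof. by elim: K k => [|K IH] k //=; rewrite IH. Qed.

(* Renewing a block coded 0 gives 1 * 1 + 1 = 2, any other block gives 1. *)
Lemma renewal_factor_code s :
  renewal_factor [seq (nw_entry (nth sZero s i), se_entry (nth sZero s i)) | i <- iota 0 (size s)]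
  = 2 ^ count is_zero s.
Proof.
have -> : [seq (nw_entry (nth sZero s i), se_entry (nth sZero s i)) | i <- iota 0 (size s)] =
          [seq (nw_entry x, se_entry x) | x <- s].
  by rewrite -[in RHS](mkseq_nth sZero s) /mkseq -map_comp.
elim: s => [|x s IH]; first by rewrite /renewal_factor big_nil.
by rewrite /renewal_factor /= big_cons -/(renewal_factor _) IH /= expnD; case: x.
Qed.

Lemma nth_shift_code s i : i < size s ->
  nth sZero (shift_code s) i =
  mk_sign (has_plus (nth sZero s (i.+1 %% size s))) (has_minus (nth sZero s i)).
Proof. by move=> hi; rewrite /shift_code (nth_map 0) ?size_iota // nth_iota. Qed.

(* Away from the cyclic wrap-around, the block i of sh(A) has the NW entry
   of block i and the SE entry of block i+1 of A. *)
Lemma shift_code_entries s i : i.+1 < size s ->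
  nw_entry (nth sZero (shift_code s) i) = nw_entry (nth sZero s i) /\
  se_entry (nth sZero (shift_code s) i) = se_entry (nth sZero s i.+1).
Proof.
move=> hi; rewrite nth_shift_code ?modn_small //; last by lia.
by rewrite /nw_entry /se_entry; case: (nth sZero s i); case: (nth sZero s i.+1).
Qed.

Lemma Mw0 W : Mw 0 W = 1.
Proof.
rewrite /Mw (eq_bigl (fun S => S == set0)); last first.
  move=> S; have -> : S = set0 by apply/setP => [[[[i ?] ?] ?]]; case: i.
  by rewrite eqxx; apply/forallP => [[[b k] [c hc]]].
by rewrite (big_pred1 set0) ?big_set0.
Qed.

Unset Implicit Arguments.

(* Lemma 3.3: write M(AD_m(wt_A)) as a chain of row transfer matrices, renew
   it, count the factors 2, and recognize the renewed chain as the chain of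
   sh(A); for m = 1 the renewed chain is the empty diamond. *)
Theorem lemma3p3 (m : nat) (A : 'M[nat]_(m.*2, 2)) :
  (1 <= m)%N -> is_binary_block A ->
  Mw m (wt A) = (2 ^ count is_zero (code A) * Mw m.-1 (wt (sh A)))%N.
Proof.
case: m A => [|m'] A // _ [s [hs ->]].
rewrite /sh code_bbmat // (Mw_chain (@wt_bbmat_cell m'.+1 s m' (leqnn _))).
rewrite (_ : iota 0 m'.+1 = 0 :: iota 1 m') // chain_renewal.
rewrite (shift_rows_map (fun i => nw_entry (nth sZero s i)) (fun i => se_entry (nth sZero s i))).
congr (_ * _); first by rewrite -renewal_factor_code hs.
clear A; case: m' hs => [|m'] hs; first by rewrite Mw0.
rewrite (Mw_chain (@wt_bbmat_cell m'.+2 (shift_code s) m' (ltnW (leqnn _)))).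
congr (chain _ _ _); apply/eq_in_map => i; rewrite mem_iota add0n => hi.
have hi' : i.+1 < size s by rewrite hs; lia.
by have [-> ->] := shift_code_entries hi'.
Qed.
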